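(* Let $\lambda=(\lambda_1,\dots,\lambda_I)$, $\mu=(\mu_1,\dots,\mu_J)$ be partitions of $n$, $P$ the random transpositions chain on $\mathcal{T}_{\lambda,\mu}$, and let $1\le i,k\le I$, $1\le j,l\le J$ with $i\ne k$, $j\ne l$. Then the following functions on $\mathcal{T}_{\lambda,\mu}$ are eigenfunctions of $P$ with eigenvalue $1-\frac4n+\frac4{n^2}$: (a) $f_{(i,j),(k,l)}(\mathbf{x})=x_{ij}x_{kl}-x_{ij}\frac{\lambda_k\mu_l}{n-2}-x_{kl}\frac{\lambda_i\mu_j}{n-2}+x_{il}x_{kj}-x_{il}\frac{\lambda_k\mu_j}{n-2}-x_{kj}\frac{\lambda_i\mu_l}{n-2}+\frac{2\lambda_k\mu_l\lambda_i\mu_j}{(n-1)(n-2)}$; (b) $f_{(i,j),(k,j)}(\mathbf{x})=x_{ij}x_{kj}-x_{ij}\frac{\lambda_i(\mu_j-1)}{n-2}-x_{kj}\frac{\lambda_k(\mu_j-1)}{n-2}+\frac{\lambda_i\lambda_k\mu_j(\mu_j-1)}{(n-1)(n-2)}$; (c) $f_{(i,j),(i,j)}(\mathbf{x})=x_{ij}^2-x_{ij}\frac{2\lambda_i\mu_j-2\lambda_i-2\mu_j+n}{n-2}+\frac{\lambda_i\mu_j(1+\lambda_i\mu_j-\lambda_i-\mu_j)}{(n-1)(n-2)}$.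
   Context: $\mathcal{T}_{\lambda,\mu}$ is the set of $I\times J$ nonnegative integer tables $\mathbf{x}=(x_{ij})$ with row sums $\lambda_i$ and column sums $\mu_j$. The random transpositions chain: for $T'$ obtained from $T$ by subtracting $1$ at cells $(i_1,j_1),(i_2,j_2)$ and adding $1$ at $(i_1,j_2),(i_2,j_1)$ (with $i_1\ne i_2$, $j_1\ne j_2$), $P(T,T')=2T_{i_1j_1}T_{i_2j_2}/n^2$; $P(T,T)$ is the remaining mass. A function $f$ is an eigenfunction with eigenvalue $\beta$ if $\sum_{\mathbf{y}}P(\mathbf{x},\mathbf{y})f(\mathbf{y})=\beta f(\mathbf{x})$ for all $\mathbf{x}$. *)

From HB Require Import structures.
From mathcomp Require Import all_boot all_order all_algebra.
Set Implicit Arguments. Unset Strict Implicit. Unset Printing Implicit Defensive.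
Import Order.TTheory GRing.Theory Num.Theory.
Local Open Scope ring_scope.

(* Entries of a table
   with total sum n are at most n, so we may (and do) type tables as
   finite functions with values in 'I_n.+1; this makes the (finite) set
   T_{lambda,mu} a subset of a finType, without changing it. *)
Definition table (I J n : nat) := {ffun 'I_I * 'I_J -> 'I_n.+1}.

Definition entry {I J n} (x : table I J n) (i : 'I_I) (j : 'I_J) : nat :=
  nat_of_ord (x (i, j)).

Definition is_partition (I n : nat) (lam : 'I_I -> nat) : Prop :=
  (forall i, (0 < lam i)%N) /\
  (forall i i' : 'I_I, (i <= i')%N -> (lam i' <= lam i)%N) /\
  (\sum_(i < I) lam i)%N = n.

Definition in_T {I J n} (lam : 'I_I -> nat) (mu : 'I_J -> nat)
  (x : table I J n) : bool :=
  [forall i, (\sum_(j < J) entry x i j)%N == lam i] &&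
  [forall j, (\sum_(i < I) entry x i j)%N == mu j].

Definition is_move {I J n} (x y : table I J n)
  (q : 'I_I * 'I_J * 'I_I * 'I_J) : bool :=
  let: (i1, j1, i2, j2) := q in
  [&& i1 != i2, j1 != j2,
      entry y i1 j1 + 1 == entry x i1 j1,
      entry y i2 j2 + 1 == entry x i2 j2,
      entry y i1 j2 == entry x i1 j2 + 1,
      entry y i2 j1 == entry x i2 j1 + 1 &
      [forall c, (c \notin [:: (i1, j1); (i2, j2); (i1, j2); (i2, j1)]) ==>
                 (y c == x c)]]%N.

(* off-diagonal transition probability P(T,T') = 2 T_{i1j1} T_{i2j2} / n^2
   (the two orderings of the move give the same value) *)
Definition Poff (R : fieldType) {I J n} (x y : table I J n) : R :=
  match [pick q | is_move x y q] with
  | Some (i1, j1, i2, j2) =>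
      2 * (entry x i1 j1)%:R * (entry x i2 j2)%:R / (n%:R ^+ 2)
  | None => 0
  end.

Definition Ptrans (R : fieldType) {I J n} (lam : 'I_I -> nat) (mu : 'I_J -> nat)
  (x y : table I J n) : R :=
  if y == x then 1 - \sum_(z | in_T lam mu z && (z != x)) Poff R x z
  else Poff R x y.

Definition is_eigenfunction (R : fieldType) {I J n} (lam : 'I_I -> nat)
  (mu : 'I_J -> nat) (f : table I J n -> R) (beta : R) : Prop :=
  forall x, in_T lam mu x ->
    \sum_(y | in_T lam mu y) Ptrans R lam mu x y * f y = beta * f x.

From HB Require Import structures.
From mathcomp Require Import all_boot all_order all_algebra.
From mathcomp Require Import ring.
From Stdlib Require Import FunctionalExtensionality.
Set Implicit Arguments. Unset Strict Implicit. Unset Printing Implicit Defensive.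
Import Order.TTheory GRing.Theory Num.Theory.
Local Open Scope ring_scope.

(* A step of the chain from x adds to x the rank-one table
   D = (e_i1 - e_i2) (x) (e_j2 - e_j1), the ordered pair of cells
   ((i1, j1), (i2, j2)) being chosen with weight x_{i1 j1} x_{i2 j2} / n^2 (each
   transposition is counted once in each order).  Hence n^2 (P f - f)(x) is the
   weighted sum of the increments f (x + D) - f x, which for f quadratic in the
   entries only involves the first and second moments of D.  As D is a signed
   sum of four products of a function of the first cell and a function of the
   second, these moments factor into entries, row sums, column sums and n; e.g.
   the first moment at (a, b) is 2 lam_a mu_b - 2 n x_ab.  Substituting them
   gives n^2 (P f - f) = (4 - 4 n) f for each of the three functions. *)

Section RandomTranspositions.
Variable R : numFieldType.
Variables I J n : nat.
Local Notation cell := ('I_I * 'I_J)%type.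
Local Notation quad := ('I_I * 'I_J * 'I_I * 'I_J)%type.
Local Notation table := (table I J n).

Definition cell1 (q : quad) : cell := q.1.1.
Definition cell2 (q : quad) : cell := (q.1.2, q.2).
Definition swapq (q : quad) : quad := let: (i1, j1, i2, j2) := q in (i2, j2, i1, j1).

Definition jump (q : quad) (c : cell) : R :=
  let: (i1, j1, i2, j2) := q in
  ((c.1 == i1)%:R - (c.1 == i2)%:R) * ((c.2 == j2)%:R - (c.2 == j1)%:R).

Definition ent (x : table) (c : cell) : R := (entry x c.1 c.2)%:R.

Definition weight (x : table) (q : quad) : R := ent x (cell1 q) * ent x (cell2 q).

Definition movable (x : table) (q : quad) : bool :=
  let: (i1, j1, i2, j2) := q in
  [&& i1 != i2, j1 != j2, 0 < entry x i1 j1 & 0 < entry x i2 j2]%N.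

Lemma jump_cells (i1 i2 : 'I_I) (j1 j2 : 'I_J) : i1 != i2 -> j1 != j2 ->
  [/\ jump (i1, j1, i2, j2) (i1, j1) = -1, jump (i1, j1, i2, j2) (i2, j2) = -1,
      jump (i1, j1, i2, j2) (i1, j2) = 1 & jump (i1, j1, i2, j2) (i2, j1) = 1].
Proof.
move=> hi hj; have hi' : i2 != i1 by rewrite eq_sym.
have hj' : j2 != j1 by rewrite eq_sym.
rewrite /jump /= !eqxx (negbTE hi) (negbTE hj) (negbTE hi') (negbTE hj').
by split; rewrite /=; ring.
Qed.

Lemma jump_out (i1 i2 : 'I_I) (j1 j2 : 'I_J) (c : cell) :
  c \notin [:: (i1, j1); (i2, j2); (i1, j2); (i2, j1)] -> jump (i1, j1, i2, j2) c = 0.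
Proof.
case: c => a b; rewrite /jump /= !inE !xpair_eqE.
by case: (a == i1); case: (a == i2); case: (b == j1); case: (b == j2); rewrite //= => _; ring.
Qed.

Lemma jump_degenerate (i1 i2 : 'I_I) (j1 j2 : 'I_J) (c : cell) :
  (i1 == i2) || (j1 == j2) -> jump (i1, j1, i2, j2) c = 0.
Proof. by case/orP => /eqP ->; rewrite /jump; ring. Qed.

Lemma jump_eq_N1 (i1 i2 : 'I_I) (j1 j2 : 'I_J) (c : cell) : i1 != i2 -> j1 != j2 ->
  jump (i1, j1, i2, j2) c = -1 -> c \in [:: (i1, j1); (i2, j2)].
Proof.
move=> hi hj; have [_ _ c12 c21] := jump_cells hi hj.
have one_neqN1 : (1 : R) != -1 by rewrite -subr_eq0 opprK -mulr2n pnatr_eq0.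
have [|/jump_out -> h0] := boolP (c \in [:: (i1, j1); (i2, j2); (i1, j2); (i2, j1)]).
  rewrite !inE => /or4P[] /eqP ->; rewrite ?c12 ?c21 ?eqxx ?orbT // => /eqP h1;
  by rewrite h1 in one_neqN1.
by have := oppr_eq0 (1 : R); rewrite oner_eq0 -h0 eqxx.
Qed.

Lemma move_ent (x y : table) q c : is_move x y q -> ent y c = ent x c + jump q c.
Proof.
case: q c => [[[i1 j1] i2] j2] [a b].
case/and3P => hi hj /and5P[/eqP h11 /eqP h22 /eqP h12 /eqP h21 /forallP hout].
have [c11 c22 c12 c21] := jump_cells hi hj.
have [|abo] := boolP ((a, b) \in [:: (i1, j1); (i2, j2); (i1, j2); (i2, j1)]).
  rewrite !inE => /or4P[] /eqP[-> ->]; rewrite ?c11 ?c22 ?c12 ?c21 /ent /=.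
  - by rewrite -h11 natrD addrK.
  - by rewrite -h22 natrD addrK.
  - by rewrite h12 natrD.
  - by rewrite h21 natrD.
by rewrite jump_out // addr0 /ent /entry (eqP (implyP (hout (a, b)) abo)).
Qed.

Lemma is_move_movable (x y : table) q : is_move x y q -> movable x q.
Proof.
case: q => [[[i1 j1] i2] j2] /= /and3P[-> -> /and3P[/eqP <- /eqP <- _]].
by rewrite !addn1.
Qed.

Lemma move_target_unique (x y y' : table) q : is_move x y q -> is_move x y' q -> y = y'.
Proof.
move=> hy hy'; apply/ffunP => -[a b]; apply/val_inj/eqP; rewrite -(eqr_nat R).
by have := move_ent (a, b) hy'; rewrite /ent /= -(move_ent (a, b) hy) => ->.
Qed.

Lemma move_swapq (x y : table) q : is_move x y q -> is_move x y (swapq q).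
Proof.
case: q => [[[i1 j1] i2] j2] /=.
case/and3P => hi hj /and5P[h11 h22 h12 h21 hout].
rewrite /is_move eq_sym hi eq_sym hj h11 h22 h12 h21 /=.
apply/forallP => c; apply/implyP => hc; apply: (implyP (forallP hout c)).
by move: hc; rewrite !inE; apply: contra => /or4P[] ->; rewrite ?orbT.
Qed.

Lemma move_quads (x y : table) q q' :
  is_move x y q -> is_move x y q' -> q' = q \/ q' = swapq q.
Proof.
move=> hq hq'; have hjump c : jump q' c = jump q c.
  by apply: (@addrI _ (ent x c)); rewrite -(move_ent c hq) -(move_ent c hq').
case: q hq hjump => [[[i1 j1] i2] j2] /and3P[hi hj _].
case: q' hq' => [[[k1 l1] k2] l2] /and3P[hk hl _] hjump.
have [c11 c22 _ _] := jump_cells hk hl.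
move: hk; have := jump_eq_N1 (c := (k1, l1)) hi hj; rewrite -hjump c11 => /(_ erefl).
have := jump_eq_N1 (c := (k2, l2)) hi hj; rewrite -hjump c22 => /(_ erefl).
rewrite !inE => /orP[] /eqP[-> ->] /orP[] /eqP[-> ->]; rewrite ?eqxx //; by [left | right].
Qed.

Lemma sum_delta (T : finType) (t : T) (F : T -> R) : \sum_s (s == t)%:R * F s = F t.
Proof.
rewrite (bigD1 t) //= eqxx mul1r big1 ?addr0 // => s /negbTE ->.
by rewrite mul0r.
Qed.

Lemma sum_delta1 (T : finType) (t : T) : \sum_s ((s == t)%:R : R) = 1.
Proof. by rewrite -[RHS](sum_delta t (fun => 1)); apply: eq_bigr => s _; rewrite mulr1. Qed.

Lemma sum_cell (F : cell -> R) : \sum_c F c = \sum_a \sum_b F (a, b).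
Proof. by rewrite pair_bigA; apply: eq_bigr => -[]. Qed.

Lemma sum_quad (G : quad -> R) : \sum_q G q = \sum_z1 \sum_z2 G (z1, z2.1, z2.2).
Proof.
under [RHS]eq_bigr do rewrite sum_cell.
by rewrite !pair_bigA; apply: eq_bigr => -[[]].
Qed.

Lemma sum_jump_row q a : \sum_b jump q (a, b) = 0.
Proof.
case: q => [[[i1 j1] i2] j2].
by rewrite /jump /= -mulr_sumr sumrB !sum_delta1 subrr mulr0.
Qed.

Lemma sum_jump_col q b : \sum_a jump q (a, b) = 0.
Proof.
case: q => [[[i1 j1] i2] j2].
by rewrite /jump /= -mulr_suml sumrB !sum_delta1 subrr mul0r.
Qed.

Lemma sum_jump q : \sum_c jump q c = 0.
Proof. by rewrite sum_cell big1 // => a _; apply: sum_jump_row. Qed.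

Definition moved_entry (x : table) (q : quad) (c : cell) : nat :=
  let: (i1, j1, i2, j2) := q in
  if c \in [:: (i1, j1); (i2, j2)] then (entry x c.1 c.2).-1
  else if c \in [:: (i1, j2); (i2, j1)] then (entry x c.1 c.2).+1
  else entry x c.1 c.2.

Lemma moved_entryE x q c : movable x q -> (moved_entry x q c)%:R = ent x c + jump q c.
Proof.
case: q => [[[i1 j1] i2] j2] /and4P[hi hj p11 p22].
have [c11 c22 c12 c21] := jump_cells hi hj.
rewrite /moved_entry /ent; case: ifP => [|out1].
  rewrite !inE => /orP[] /eqP ->.
  - by rewrite c11 /= -[in RHS](prednK p11) -natr1 addrK.
  - by rewrite c22 /= -[in RHS](prednK p22) -natr1 addrK.
case: ifP => [|out2].
  by rewrite !inE => /orP[] /eqP ->; rewrite ?c12 ?c21 natr1.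
rewrite !inE in out1 out2.
by rewrite jump_out ?addr0 // !inE orbA out1 out2.
Qed.

Definition do_move (x : table) (q : quad) : table := [ffun c => inord (moved_entry x q c)].

Definition ind m (o : option 'I_m) (i : 'I_m) : R := if o is Some a then (a == i)%:R else 1.

Definition omerge m (o o' : option 'I_m) : option 'I_m := if o is Some _ then o else o'.

Definition agree m (o o' : option 'I_m) : R :=
  if o is Some a then if o' is Some a' then (a == a')%:R else 1 else 1.

Lemma ind_mul m (o o' : option 'I_m) i :
  ind o i * ind o' i = agree o o' * ind (omerge o o') i.
Proof.
case: o o' => [a|] [a'|] /=; rewrite ?mul1r ?mulr1 //.
case: (a =P i) => [<-|_]; rewrite /agree /= ?mulr1n ?mulr0n ?mul0r ?mulr0 //.
by rewrite mul1r mulr1 eq_sym.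
Qed.

Lemma sum_ind m (o : option 'I_m) (G : 'I_m -> R) :
  \sum_i ind o i * G i = if o is Some a then G a else \sum_i G i.
Proof.
case: o => [a|] /=; last by apply: eq_bigr => i _; rewrite mul1r.
by rewrite -(sum_delta a); apply: eq_bigr => i _; rewrite eq_sym.
Qed.

(* [rect (Some a) (Some b)], [rect (Some a) None], [rect None (Some b)] and
   [rect None None] are the indicators of the cell [(a, b)], of row [a], of
   column [b] and of the whole table. *)
Definition rect (oa : option 'I_I) (ob : option 'I_J) (z : cell) : R := ind oa z.1 * ind ob z.2.

Lemma rect_mul oa ob oa' ob' z : rect oa ob z * rect oa' ob' z =
  agree oa oa' * agree ob ob' * rect (omerge oa oa') (omerge ob ob') z.
Proof. by rewrite /rect mulrACA !ind_mul mulrACA. Qed.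

Definition jump_terms (c : cell) : seq (R * (cell -> R) * (cell -> R)) :=
  let: (a, b) := c in
  [:: (1, rect (Some a) None, rect None (Some b));
      (-1, rect (Some a) (Some b), rect None None);
      (-1, rect None None, rect (Some a) (Some b));
      (1, rect None (Some b), rect (Some a) None)].

Lemma jump_split q c :
  jump q c = \sum_(t <- jump_terms c) t.1.1 * (t.1.2 (cell1 q) * t.2 (cell2 q)).
Proof.
by case: q c => [[[i1 j1] i2] j2] [a b]; rewrite !big_cons big_nil /rect /ind /jump /=; ring.
Qed.

Definition mass (x : table) (A : cell -> R) : R := \sum_z ent x z * A z.

Lemma mass_rect_mul x oa ob oa' ob' :
  mass x (fun z => rect oa ob z * rect oa' ob' z) =
  agree oa oa' * agree ob ob' * mass x (rect (omerge oa oa') (omerge ob ob')).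
Proof. by rewrite /mass mulr_sumr; apply: eq_bigr => z _; rewrite rect_mul mulrCA. Qed.

Lemma sum_weight_mul x s A B :
  \sum_q weight x q * (s * (A (cell1 q) * B (cell2 q))) = s * (mass x A * mass x B).
Proof.
rewrite sum_quad /mass mulr_suml mulr_sumr; apply: eq_bigr => z1 _.
rewrite !mulr_sumr; apply: eq_bigr => z2 _.
by rewrite /weight /cell1 /cell2 /= -surjective_pairing; ring.
Qed.

Definition moment1 (x : table) (c : cell) : R := \sum_q weight x q * jump q c.
Definition moment2 (x : table) (c c' : cell) : R :=
  \sum_q weight x q * (jump q c * jump q c').

Lemma moment1_split x c :
  moment1 x c = \sum_(t <- jump_terms c) t.1.1 * (mass x t.1.2 * mass x t.2).
Proof.
rewrite /moment1; under eq_bigr do rewrite jump_split big_distrr /=.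
by rewrite exchange_big; apply: eq_bigr => t _; rewrite sum_weight_mul.
Qed.

Lemma moment2_split x c c' : moment2 x c c' =
  \sum_(t <- jump_terms c) \sum_(t' <- jump_terms c') t.1.1 * t'.1.1 *
    (mass x (fun z => t.1.2 z * t'.1.2 z) * mass x (fun z => t.2 z * t'.2 z)).
Proof.
rewrite /moment2; under eq_bigr do rewrite !jump_split big_distrlr big_distrr /=.
rewrite exchange_big; apply: eq_bigr => t _.
under eq_bigr do rewrite big_distrr /=.
rewrite exchange_big; apply: eq_bigr => t' _.
by rewrite -sum_weight_mul; apply: eq_bigr => q _; ring.
Qed.

Definition drift (x : table) (F : (cell -> R) -> R) : R :=
  \sum_q weight x q * (F (fun c => ent x c + jump q c) - F (ent x)).

Lemma driftD x F G : drift x (fun Z => F Z + G Z) = drift x F + drift x G.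
Proof. by rewrite /drift -big_split /=; apply: eq_bigr => q _; ring. Qed.

Lemma drift_addr x F γ : drift x (fun Z => F Z + γ) = drift x F.
Proof. by apply: eq_bigr => q _; ring. Qed.

Lemma drift_movable x F :
  \sum_(q | movable x q) weight x q * (F (fun c => ent x c + jump q c) - F (ent x)) =
  drift x F.
Proof.
rewrite /drift [RHS](bigID (movable x)) /= [X in _ = _ + X]big1 ?addr0 //.
move=> -[[[i1 j1] i2] j2] not_movable.
have [->|] := eqVneq (weight x (i1, j1, i2, j2)) 0; first by rewrite mul0r.
rewrite mulf_eq0 !pnatr_eq0 negb_or -!lt0n => /andP[p11 p22].
move: not_movable; rewrite /= p11 p22 !andbT negb_and !negbK => degenerate.
have -> : (fun c => ent x c + jump (i1, j1, i2, j2) c) = ent x.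
  by apply: functional_extensionality => c; rewrite jump_degenerate ?addr0.
by rewrite subrr mulr0.
Qed.

Section Transitions.
Variables (lam : 'I_I -> nat) (mu : 'I_J -> nat).
Hypothesis lam_sum : (\sum_a lam a)%N = n.

Lemma in_TP (x : table) : reflect
  ((forall a, \sum_b ent x (a, b) = (lam a)%:R) /\ (forall b, \sum_a ent x (a, b) = (mu b)%:R))
  (in_T lam mu x).
Proof.
apply: (iffP andP) => [[/forallP hr /forallP hc] | [hr hc]].
  by split=> [a | b]; apply/eqP; rewrite -natr_sum eqr_nat; [apply: hr | apply: hc].
by split; apply/forallP => a; rewrite -(eqr_nat R) natr_sum ?hr ?hc.
Qed.

Lemma sum_ent x : in_T lam mu x -> \sum_c ent x c = n%:R.
Proof.
case/in_TP => hr _; rewrite sum_cell -lam_sum natr_sum.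
by apply: eq_bigr => a _; apply: hr.
Qed.

Lemma moved_entry_le x q c : in_T lam mu x -> movable x q -> (moved_entry x q c <= n)%N.
Proof.
move=> hx hq; rewrite -(ler_nat R).
have -> : n%:R = \sum_c' ((moved_entry x q c')%:R : R).
  under eq_bigr do rewrite moved_entryE //.
  by rewrite big_split /= sum_jump addr0 sum_ent.
by rewrite (bigD1 c) //= lerDl sumr_ge0.
Qed.

Lemma ent_do_move x q c : in_T lam mu x -> movable x q ->
  ent (do_move x q) c = ent x c + jump q c.
Proof.
move=> hx hq; rewrite -moved_entryE // /ent /entry ffunE inordK //.
by rewrite ltnS -surjective_pairing moved_entry_le.
Qed.

Lemma do_move_in_T x q : in_T lam mu x -> movable x q -> in_T lam mu (do_move x q).
Proof.
move=> hx hq; have [hr hc] := in_TP x hx.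
apply/in_TP; split=> [a | b]; under eq_bigr do rewrite ent_do_move //.
  by rewrite big_split /= sum_jump_row addr0 hr.
by rewrite big_split /= sum_jump_col addr0 hc.
Qed.

Lemma do_move_is_move x q : in_T lam mu x -> movable x q -> is_move x (do_move x q) q.
Proof.
move=> hx hq; have dE a b := ent_do_move (a, b) hx hq; rewrite /ent /= in dE.
case: q hq dE => [[[i1 j1] i2] j2] /and4P[hi hj _ _] dE.
have [c11 c22 c12 c21] := jump_cells hi hj.
rewrite /is_move hi hj -!(eqr_nat R) !natrD !dE c11 c22 c12 c21 !subrK !eqxx /=.
apply/forallP => -[a b]; apply/implyP => hab; apply/eqP/val_inj/eqP.
by rewrite -(eqr_nat R) dE jump_out // addr0.
Qed.

Lemma do_move_neq x q : in_T lam mu x -> movable x q -> do_move x q != x.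
Proof.
move=> hx hq; apply/eqP => hxx.
have := ent_do_move (cell1 q) hx hq; rewrite hxx -[X in X = _]addr0 => /addrI.
case: q hq {hxx} => [[[i1 j1] i2] j2] /and4P[hi hj _ _].
have [-> _ _ _] := jump_cells hi hj.
by move/eqP; rewrite eq_sym oppr_eq0 oner_eq0.
Qed.

Lemma sum_Ptrans x (f : table -> R) : in_T lam mu x ->
  \sum_(y | in_T lam mu y) Ptrans R lam mu x y * f y =
  f x + \sum_(y | in_T lam mu y && (y != x)) Poff R x y * (f y - f x).
Proof.
move=> hx; rewrite (bigD1 x) //= /Ptrans eqxx.
under eq_bigr => y /andP[_ /negbTE ->] do [].
under [X in _ = _ + X]eq_bigr do rewrite mulrBr.
by rewrite sumrB -mulr_suml mulrBl mul1r addrAC addrA.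
Qed.

(* [Poff] picks one ordering of the move; the moves from [x] to [y] are exactly
   that ordering and its swap, which have the same weight. *)
Lemma Poff_moves x y : Poff R x y = (\sum_(q | is_move x y q) weight x q) / n%:R ^+ 2.
Proof.
rewrite /Poff; case: pickP => [q hq | nomove]; last by rewrite big_pred0 ?mul0r.
have hsw := move_swapq hq.
have swap_neq : swapq q != q.
  by case: q hq {hsw} => [[[i1 j1] i2] j2] /and3P[hi _ _]; apply: contra hi => /eqP[->].
rewrite (bigD1 q) // (bigD1 (swapq q)) /=; last by rewrite hsw swap_neq.
rewrite big_pred0 => [|q']; last first.
  by apply/negP => /andP[/andP[/(move_quads hq)[]-> ]]; rewrite ?eqxx ?andbF.
case: q {hq hsw swap_neq} => [[[i1 j1] i2] j2].
by rewrite /weight /ent /cell1 /cell2 /= addr0; ring.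
Qed.

Lemma sum_Poff x (g : table -> R) : in_T lam mu x ->
  \sum_(y | in_T lam mu y && (y != x)) Poff R x y * g y =
  (\sum_(q | movable x q) weight x q * g (do_move x q)) / n%:R ^+ 2.
Proof.
move=> hx; rewrite mulr_suml (partition_big (do_move x) (fun y => in_T lam mu y && (y != x))).
  apply: eq_bigr => y _; rewrite Poff_moves !mulr_suml.
  have do_moveE q : is_move x y q -> do_move x q = y.
    by move=> hm; apply: (move_target_unique _ hm); exact: do_move_is_move (is_move_movable hm).
  apply: eq_big => [q | q /do_moveE ->]; last by rewrite mulrAC.
  apply/idP/andP => [hm | [hq /eqP <-]]; last exact: do_move_is_move.
  by rewrite (is_move_movable hm) do_moveE.
by move=> q hq; rewrite do_move_in_T ?do_move_neq.
Qed.

Lemma Ptrans_drift x F : in_T lam mu x ->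
  \sum_(y | in_T lam mu y) Ptrans R lam mu x y * F (ent y) =
  F (ent x) + drift x F / n%:R ^+ 2.
Proof.
move=> hx; rewrite sum_Ptrans // sum_Poff // -drift_movable.
congr (_ + _ / _); apply: eq_bigr => q hq.
by rewrite (functional_extensionality _ _ (fun c => ent_do_move c hx hq)).
Qed.

Lemma eigen_of_drift (F : (cell -> R) -> R) (f : table -> R) : (0 < n)%N ->
  (forall x, in_T lam mu x -> drift x F = (4 - 4 * n%:R) * F (ent x)) ->
  (forall y, f y = F (ent y)) ->
  is_eigenfunction lam mu f (1 - 4 / n%:R + 4 / n%:R ^+ 2).
Proof.
move=> n_gt0 hdrift hf x hx; under eq_bigr do rewrite hf.
rewrite Ptrans_drift // hdrift // hf; field.
by rewrite pnatr_eq0 -lt0n.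
Qed.

Lemma mass_rect x oa ob : in_T lam mu x ->
  mass x (rect oa ob) = match oa, ob with
                        | Some a, Some b => ent x (a, b)
                        | Some a, None => (lam a)%:R
                        | None, Some b => (mu b)%:R
                        | None, None => n%:R
                        end.
Proof.
move=> hx; have [hr hc] := in_TP x hx.
rewrite /mass sum_cell.
under eq_bigr => a _ do under eq_bigr => b _ do rewrite /rect /= mulrCA (mulrC (ent x _)).
under eq_bigr => a _ do rewrite -mulr_sumr sum_ind.
rewrite sum_ind; case: oa ob => [a|] [b|];
  [by [] | exact: hr | exact: hc | by rewrite -sum_cell sum_ent].
Qed.

Lemma moment1E x a b : in_T lam mu x ->
  moment1 x (a, b) = 2 * ((lam a)%:R * (mu b)%:R) - 2 * n%:R * ent x (a, b).
Proof.
move=> hx; rewrite moment1_split !big_cons big_nil /= !(mass_rect _ _ hx) /=; ring.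
Qed.

Lemma moment2E x a b a' b' : in_T lam mu x ->
  moment2 x (a, b) (a', b') =
    2 * (ent x (a, b) * ent x (a', b') + ent x (a, b') * ent x (a', b))
  - 2 * (b == b')%:R * (ent x (a, b) * (lam a')%:R + ent x (a', b) * (lam a)%:R)
  - 2 * (a == a')%:R * (ent x (a, b) * (mu b')%:R + ent x (a, b') * (mu b)%:R)
  + 2 * (a == a')%:R * (b == b')%:R * (n%:R * ent x (a, b) + (lam a)%:R * (mu b)%:R).
Proof.
move=> hx; rewrite moment2_split !big_cons !big_nil /= !mass_rect_mul !(mass_rect _ _ hx) /=.
have [<-|na] := eqVneq a a'; have [<-|nb] := eqVneq b b';
  rewrite ?eqxx ?(negbTE na) ?(negbTE nb) /=; ring.
Qed.

Definition pairF (c c' : cell) (α β : R) (Z : cell -> R) : R :=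
  Z c * Z c' - Z c * α - Z c' * β.

Lemma drift_pairF x c c' α β : drift x (pairF c c' α β) =
  ent x c * moment1 x c' + ent x c' * moment1 x c + moment2 x c c'
  - α * moment1 x c - β * moment1 x c'.
Proof.
rewrite /moment1 /moment2 !mulr_sumr -!big_split -!sumrB /=.
by apply: eq_bigr => q _; rewrite /pairF; ring.
Qed.

Section Eigenfunctions.
Hypothesis n_gt2 : (2 < n)%N.
Variables (i k : 'I_I) (j l : 'I_J).
Hypotheses (hik : i != k) (hjl : j != l).

Let L a : R := (lam a)%:R.
Let M b : R := (mu b)%:R.
Let N : R := n%:R.

Lemma N_sub1_neq0 : N - 1 != 0.
Proof. by rewrite subr_eq0 (eqr_nat R n 1) gtn_eqF // (ltn_trans _ n_gt2). Qed.

Lemma N_sub2_neq0 : N - 2 != 0.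
Proof. by rewrite subr_eq0 (eqr_nat R n 2) gtn_eqF. Qed.

Definition F_cross (Z : cell -> R) : R :=
  pairF (i, j) (k, l) (L k * M l / (N - 2)) (L i * M j / (N - 2)) Z
  + pairF (i, l) (k, j) (L k * M j / (N - 2)) (L i * M l / (N - 2)) Z
  + 2 * L k * M l * L i * M j / ((N - 1) * (N - 2)).

Definition F_column (Z : cell -> R) : R :=
  pairF (i, j) (k, j) (L k * (M j - 1) / (N - 2)) (L i * (M j - 1) / (N - 2)) Z
  + L i * L k * M j * (M j - 1) / ((N - 1) * (N - 2)).

Definition F_diag (Z : cell -> R) : R :=
  pairF (i, j) (i, j) ((2 * L i * M j - 2 * L i - 2 * M j + N) / (N - 2)) 0 Z
  + L i * M j * (1 + L i * M j - L i - M j) / ((N - 1) * (N - 2)).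

Lemma drift_F_cross x : in_T lam mu x -> drift x F_cross = (4 - 4 * N) * F_cross (ent x).
Proof.
move=> hx; rewrite drift_addr driftD !drift_pairF !(moment1E _ _ hx) !(moment2E _ _ _ _ hx).
rewrite (negbTE hik) (negbTE hjl) (eq_sym l) (negbTE hjl) /F_cross /pairF /L /M /N /=.
by field; rewrite N_sub1_neq0 N_sub2_neq0.
Qed.

Lemma drift_F_column x : in_T lam mu x -> drift x F_column = (4 - 4 * N) * F_column (ent x).
Proof.
move=> hx; rewrite drift_addr drift_pairF !(moment1E _ _ hx) (moment2E _ _ _ _ hx).
rewrite (negbTE hik) eqxx /F_column /pairF /L /M /N /=.
by field; rewrite N_sub1_neq0 N_sub2_neq0.
Qed.

Lemma drift_F_diag x : in_T lam mu x -> drift x F_diag = (4 - 4 * N) * F_diag (ent x).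
Proof.
move=> hx; rewrite drift_addr drift_pairF !(moment1E _ _ hx) (moment2E _ _ _ _ hx).
rewrite !eqxx /F_diag /pairF /L /M /N /=.
by field; rewrite N_sub1_neq0 N_sub2_neq0.
Qed.
End Eigenfunctions.
End Transitions.
End RandomTranspositions.

Theorem lemma3p5 (R : realFieldType) (I J n : nat)
  (lam : 'I_I -> nat) (mu : 'I_J -> nat)
  (hlam : is_partition n lam) (hmu : is_partition n mu)
  (hn : (2 < n)%N)
  (i k : 'I_I) (j l : 'I_J) (hik : i != k) (hjl : j != l) :
  let x_ := fun (x : table I J n) a b => (entry x a b)%:R : R in
  let L := fun a => (lam a)%:R : R in
  let M := fun b => (mu b)%:R : R in
  let N := n%:R : R in
  let beta := 1 - 4 / N + 4 / N ^+ 2 in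
  [/\ is_eigenfunction lam mu
        (fun x => x_ x i j * x_ x k l - x_ x i j * (L k * M l / (N - 2))
                  - x_ x k l * (L i * M j / (N - 2))
                  + x_ x i l * x_ x k j - x_ x i l * (L k * M j / (N - 2))
                  - x_ x k j * (L i * M l / (N - 2))
                  + 2 * L k * M l * L i * M j / ((N - 1) * (N - 2))) beta,
      is_eigenfunction lam mu
        (fun x => x_ x i j * x_ x k j - x_ x i j * (L k * (M j - 1) / (N - 2))
                  - x_ x k j * (L i * (M j - 1) / (N - 2))
                  + L i * L k * M j * (M j - 1) / ((N - 1) * (N - 2))) beta &
      is_eigenfunction lam mu
        (fun x => x_ x i j ^+ 2
                  - x_ x i j * ((2 * L i * M j - 2 * L i - 2 * M j + N) / (N - 2))
                  + L i * M j * (1 + L i * M j - L i - M j) / ((N - 1) * (N - 2)))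
        beta].
Proof.
have lam_sum : (\sum_a lam a)%N = n by case: hlam => _ [].
have n_gt0 : (0 < n)%N by apply: ltn_trans hn.
rewrite /=; split.
- apply: (eigen_of_drift lam_sum n_gt0 (drift_F_cross R lam_sum hn hik hjl)) => y.
  by rewrite /F_cross /pairF /ent /=; ring.
- apply: (eigen_of_drift lam_sum n_gt0 (drift_F_column R lam_sum hn j hik)) => y.
  by rewrite /F_column /pairF /ent /=; ring.
- apply: (eigen_of_drift lam_sum n_gt0 (drift_F_diag R lam_sum hn i j)) => y.
  by rewrite /F_diag /pairF /ent /=; ring.
Qed.
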